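(* Let $\mathcal{A}$ and $\mathcal{U}$ be Banach algebras, $\theta$ a nonzero character on $\mathcal{A}$, $\mathcal{X}$ a simple Banach $(\mathcal{A}\times_{\theta}\mathcal{U})$-bimodule, and $D:\mathcal{A}\times_{\theta}\mathcal{U}\to\mathcal{X}$ a derivation. Then $D$ is continuous if either of the following holds: (i) $\mathrm{ann}_{\mathcal{X}}\mathcal{U}\neq\mathcal{X}$ and $Z_{\mathcal{X}}(\mathcal{A})\neq\mathcal{X}$; (ii) $\mathrm{ann}_{\mathcal{X}}\mathcal{U}=\{0\}$ and $Z_{\mathcal{X}}(\mathcal{A})\neq\mathcal{X}$.
   Context: The Lau product $\mathcal{A}\times_{\theta}\mathcal{U}$ is $\mathcal{A}\times\mathcal{U}$ with norm $\|(a,u)\|=\|a\|+\|u\|$ and product $(a,u)(a',u')=(aa',\theta(a)u'+\theta(a')u+uu')$. $\mathcal{X}$ is an $\mathcal{A}$-bimodule via $ax=(a,0)x$, $xa=x(a,0)$ and a $\mathcal{U}$-bimodule via $ux=(0,u)x$, $xu=x(0,u)$. Simple means the only closed $(\mathcal{A}\times_{\theta}\mathcal{U})$-subbimodules of $\mathcal{X}$ are $\{0\}$ and $\mathcal{X}$. $\mathrm{ann}_{\mathcal{X}}\mathcal{U}=\{x: ux=xu=0\ \forall u\in\mathcal{U}\}$; $Z_{\mathcal{X}}(\mathcal{A})=\{x: ax=xa\ \forall a\in\mathcal{A}\}$. *)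

From HB Require Import structures.
From mathcomp Require Import all_boot all_order all_algebra.
From mathcomp Require Import all_classical all_reals all_analysis.
From mathcomp Require Import complex.
Import Order.TTheory GRing.Theory Num.Theory.
Import numFieldNormedType.Exports.

Set Implicit Arguments.
Unset Strict Implicit.
Unset Printing Implicit Defensive.

Local Open Scope ring_scope.
Local Open Scope classical_set_scope.

Section BanachAlgebras.
Variable K : numFieldType.

Definition banach_algebra (A : completeNormedModType K) (mul : A -> A -> A)
  : Prop :=
  ((forall a b c, mul a (mul b c) = mul (mul a b) c) /\
      (forall a b c, mul (a + b) c = mul a c + mul b c) /\
      (forall a b c, mul a (b + c) = mul a b + mul a c) /\
      (forall (k : K) a b, mul (k *: a) b = k *: mul a b) /\
      (forall (k : K) a b, mul a (k *: b) = k *: mul a b) /\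
      (forall a b, `|mul a b| <= `|a| * `|b|)).

Definition character (A : completeNormedModType K) (mul : A -> A -> A)
  (theta : A -> K) : Prop :=
  ((forall a b, theta (a + b) = theta a + theta b) /\
      (forall (k : K) a, theta (k *: a) = k * theta a) /\
      (forall a b, theta (mul a b) = theta a * theta b) /\
      (exists a, theta a != 0)).

Section Lau.
Variables (A U : completeNormedModType K).

Definition lau_mul (theta : A -> K) (mulA : A -> A -> A) (mulU : U -> U -> U)
  (p q : A * U) : A * U :=
  (mulA p.1 q.1, theta p.1 *: q.2 + theta q.1 *: p.2 + mulU p.2 q.2).

Definition lau_norm (p : A * U) : K := `|p.1| + `|p.2|.

Variable X : completeNormedModType K.
Variables (mulB : A * U -> A * U -> A * U).
Variables (lm : A * U -> X -> X) (rm : X -> A * U -> X).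

Definition banach_bimodule : Prop :=
  ((forall p q x, lm (p + q) x = lm p x + lm q x) /\
      (forall p x y, lm p (x + y) = lm p x + lm p y) /\
      (forall (k : K) p x, lm (k *: p) x = k *: lm p x) /\
      (forall (k : K) p x, lm p (k *: x) = k *: lm p x) /\
      (forall p q x, rm x (p + q) = rm x p + rm x q) /\
      (forall p x y, rm (x + y) p = rm x p + rm y p) /\
      (forall (k : K) p x, rm x (k *: p) = k *: rm x p) /\
      (forall (k : K) p x, rm (k *: x) p = k *: rm x p) /\
      (forall p q x, lm (mulB p q) x = lm p (lm q x)) /\
      (forall p q x, rm x (mulB p q) = rm (rm x p) q) /\
      (forall p q x, rm (lm p x) q = lm p (rm x q)) /\
      (forall p x, `|lm p x| <= lau_norm p * `|x|) /\
      (forall p x, `|rm x p| <= lau_norm p * `|x|)).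

Definition closed_subbimodule (S : set X) : Prop :=
  (S 0 /\
      (forall x y, S x -> S y -> S (x + y)) /\
      (forall (k : K) x, S x -> S (k *: x)) /\
      (forall p x, S x -> S (lm p x)) /\
      (forall p x, S x -> S (rm x p)) /\
      closed S).

Definition simple_bimodule : Prop :=
  forall S : set X, closed_subbimodule S -> S = [set 0] \/ S = setT.

Definition ann_U : set X :=
  [set x | forall u : U, lm (0, u) x = 0 /\ rm x (0, u) = 0].

Definition centre_A : set X :=
  [set x | forall a : A, lm (a, 0) x = rm x (a, 0)].

Definition derivation (D : A * U -> X) : Prop :=
  ((forall p q, D (p + q) = D p + D q) /\
      (forall (k : K) p, D (k *: p) = k *: D p) /\
      (forall p q, D (mulB p q) = rm (D p) q + lm p (D q))).

End Lau.
End BanachAlgebras.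

(* Annihilators and eigenspaces of X defined by bounded module maps are closed
   sub-bimodules, hence {0} or X.  Condition (ii) implies (i), since
   Z_X(A) <> X forces X <> {0}.  The left and right annihilators {x | U x = 0}
   and {x | x U = 0} are not both X, as their intersection ann_X U is not, so
   one of them is {0}; passing to the opposite algebras and bimodule, which
   exchanges left and right, we may assume it is the left one.  Then
   U (a x - theta(a) x) = 0 gives a x = theta(a) x, so |theta(a)| <= |a|, and
   the right eigenspace {x | x a = theta(a) x} is {0}, for otherwise every x
   would lie in Z_X(A).  Applying D to (0,u)(a,0) = (0, theta(a) u) yields
     D(0,u) a - theta(a) D(0,u) = - u D(a,0)   and
     u D(a,0) = theta(a) D(0,u) - D(0,u) a,
   so the maps x |-> x a - theta(a) x, resp. x |-> u x, send the restrictions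
   of D to U, resp. A, to bounded maps.  Both families separate the points of
   X, hence both restrictions have closed graphs and are bounded by the closed
   graph theorem. *)

From HB Require Import structures.
From mathcomp Require Import all_boot all_order all_algebra.
From mathcomp Require Import all_classical all_reals all_analysis.
From mathcomp Require Import complex.
From mathcomp Require Import ring lra.
Import Order.TTheory GRing.Theory Num.Theory.
Import numFieldNormedType.Exports.

Set Implicit Arguments.
Unset Strict Implicit.
Unset Printing Implicit Defensive.

Local Open Scope ring_scope.
Local Open Scope classical_set_scope.

Local Notation "x %:C" := (real_complex _ x) (format "x %:C").

Section RealNorm.
Context {R : realType}.
Local Notation C := R[i].

(* Norms over [R[i]] are [R[i]]-valued; their real part [rnorm] lets [lra] and
   [nra] handle the estimates. *)
Definition rnorm {V : normedZmodType C} (x : V) : R := complex.Re `|x|.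

Lemma gt0_complex_real (e : C) : 0 < e -> exists2 r : R, 0 < r & e = r%:C.
Proof.
move=> e0; exists (complex.Re e); last by rewrite RRe_real // gtr0_real.
by rewrite -ltcR RRe_real // gtr0_real.
Qed.

Lemma rnormE {V : normedZmodType C} (x : V) : `|x| = (rnorm x)%:C.
Proof. by rewrite /rnorm RRe_real // ger0_real. Qed.

Lemma rnorm_ge0 {V : normedZmodType C} (x : V) : 0 <= rnorm x.
Proof. by rewrite -ler0c -rnormE. Qed.

Lemma rnorm_gt0 {V : normedZmodType C} (x : V) : (0 < rnorm x) = (x != 0).
Proof. by rewrite -ltcR -rnormE normr_gt0. Qed.

Lemma rnorm0 {V : normedZmodType C} : rnorm (0 : V) = 0.
Proof. by rewrite /rnorm normr0. Qed.

Lemma rnormN {V : normedZmodType C} (x : V) : rnorm (- x) = rnorm x.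
Proof. by rewrite /rnorm normrN. Qed.

Lemma rdistC {V : normedZmodType C} (x y : V) : rnorm (x - y) = rnorm (y - x).
Proof. by rewrite /rnorm distrC. Qed.

Lemma rnormD {V : normedZmodType C} (x y : V) : rnorm (x + y) <= rnorm x + rnorm y.
Proof. by rewrite -lecR rmorphD /= -!rnormE ler_normD. Qed.

Lemma rnorm_real (c : R) : rnorm (c%:C : C) = `|c|.
Proof.
apply: complexI; rewrite -rnormE.
have [c0|c0] := leP 0 c; first by rewrite !ger0_norm // ler0c.
by rewrite !ltr0_norm ?ltcR // rmorphN.
Qed.

Lemma rnormZ {V : normedModType C} (k : C) (x : V) : rnorm (k *: x) = rnorm k * rnorm x.
Proof. by apply: complexI; rewrite rmorphM /= -!rnormE normrZ. Qed.

Lemma rnormZ_real {V : normedModType C} (t : R) (x : V) :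
  0 <= t -> rnorm (t%:C *: x) = t * rnorm x.
Proof. by move=> t0; rewrite rnormZ rnorm_real ger0_norm. Qed.

Lemma rnorm_fst {V W : normedZmodType C} (p : V * W) : rnorm p.1 <= rnorm p.
Proof.
by rewrite -lecR -!rnormE prod_normE /Order.max; case: ifPn => // /ltW.
Qed.

Lemma rnorm_snd {V W : normedZmodType C} (p : V * W) : rnorm p.2 <= rnorm p.
Proof.
rewrite -lecR -!rnormE prod_normE /Order.max.
by case: ifPn => // h; rewrite real_leNgt ?normr_real.
Qed.

End RealNorm.

Lemma addmorph0 {G H : zmodType} {f : G -> H} :
  {morph f : x y / x + y} -> f 0 = 0.
Proof. by move=> fD; apply: (@addrI _ (f 0)); rewrite -fD !addr0. Qed.

Lemma addmorphB {G H : zmodType} {f : G -> H} :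
  {morph f : x y / x + y} -> {morph f : x y / x - y}.
Proof. by move=> fD x y; apply: (@addIr _ (f y)); rewrite -fD !subrK. Qed.

Section Convergence.
Context {R : realType}.
Local Notation C := R[i].

Lemma cvg_rnormP {V : normedModType C} (s : nat -> V) (l : V) :
  s @ \oo --> l <->
  forall e : R, 0 < e -> exists N, forall n, (N <= n)%N -> rnorm (s n - l) < e.
Proof.
split=> [/cvgrPdist_lt sl e e0|sl].
  have e0C : 0 < e%:C by rewrite ltcR.
  have [N _ hN] := sl _ e0C.
  by exists N => n /hN; rewrite rdistC rnormE ltcR.
apply/cvgrPdist_lt => _ /gt0_complex_real [e e0 ->].
have [N hN] := sl _ e0.
by exists N => // n /hN; rewrite rdistC rnormE ltcR.
Qed.

Lemma cauchy_rnorm_cvg {V : completeNormedModType C} (s : nat -> V) :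
  (forall e : R, 0 < e -> exists N, forall n m,
      (N <= n)%N -> (N <= m)%N -> rnorm (s n - s m) < e) ->
  exists l : V, s @ \oo --> l.
Proof.
move=> s_cauchy; suff : cvg (s @ \oo) by move=> /cvg_ex.
apply: cauchy_cvg; apply/cauchy_exP => _ /gt0_complex_real [e e0 ->].
have [N hN] := s_cauchy _ e0.
by exists (s N), N => // n /= Nn; rewrite -ball_normE /ball_ /= rnormE ltcR hN.
Qed.

Lemma rnorm_cvg_le {V : normedModType C} (s : nat -> V) (l a : V) (r : R) (N : nat) :
  s @ \oo --> l -> (forall n, (N <= n)%N -> rnorm (s n - a) <= r) ->
  rnorm (l - a) <= r.
Proof.
move=> /cvg_rnormP sl sa; apply/ler_addgt0Pr => e /sl [M hM].
have := hM _ (leq_maxr N M); have := sa _ (leq_maxl N M).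
have := rnormD (l - s (maxn N M)) (s (maxn N M) - a).
by rewrite addrA subrK (rdistC (s _) l); lra.
Qed.

Lemma pow2_small {a e : R} : 0 <= a -> 0 < e ->
  exists N, forall n, (N <= n)%N -> a * 2 ^- n < e.
Proof.
move=> a0 e0; exists (Num.truncn ((a + 1) / e)) => n Nn.
have h1 : (a + 1) / e < (Num.truncn ((a + 1) / e)).+1%:R := truncnS_gt _.
have h2 : (Num.truncn ((a + 1) / e)).+1%:R <= n.+1%:R :> R by rewrite ler_nat.
have h3 : n.+1%:R <= 2 ^+ n :> R by rewrite -natrX ler_nat ltn_expl.
rewrite ltr_pdivrMr // in h1; rewrite ltr_pdivrMr ?exprn_gt0 //; nra.
Qed.

Definition norm_bounded {V W : normedZmodType C} (f : V -> W) :=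
  exists2 c : R, 0 <= c & forall x, rnorm (f x) <= c * rnorm x.

Lemma norm_bounded_continuous {V W : normedModType C} {f : V -> W} :
  {morph f : x y / x + y} -> norm_bounded f -> continuous f.
Proof.
move=> fD [c c0 fc] x; apply/cvgrPdist_lt => _ /gt0_complex_real [e e0 ->].
have c1 : 0 < c + 1 by rewrite ltr_wpDl.
have d0 : 0 < (e / (c + 1))%:C by rewrite ltcR divr_gt0.
apply: (filterS _ (nbhsx_ballx x _ d0)) => y.
rewrite -ball_normE /ball_ /= !rnormE !ltcR -(addmorphB fD) => xy.
apply: le_lt_trans (fc _) _.
have := rnorm_ge0 (x - y); rewrite ltr_pdivlMr // in xy; lra.
Qed.

Lemma closed_joint_kernel {V W : normedModType C} {I : Type} (g : I -> V -> W) :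
  (forall i, {morph g i : x y / x + y}) -> (forall i, norm_bounded (g i)) ->
  closed [set x | forall i, g i x = 0].
Proof.
move=> gD gb.
have -> : [set x | forall i, g i x = 0] = \bigcap_(i in setT) (g i @^-1` [set 0]).
  by apply/seteqP; split => [x h i _ | x h i] /=; [exact: h | exact: h].
apply: closed_bigI => i _; apply: preimage_closed.
  by move=> x _; exact: norm_bounded_continuous.
exact/accessible_closed_set1/hausdorff_accessible/norm_hausdorff.
Qed.

End Convergence.

Section Baire.
Context {R : realType} {V : completeNormedModType R[i]}.

Definition dense_in_ball (S : set V) (x : V) (r : R) :=
  forall y, rnorm (y - x) < r ->
  forall e : R, 0 < e -> exists2 z, S z & rnorm (y - z) < e.

Lemma shrink_ball (S : set V) (x : V) (r : R) :
  0 < r -> ~ dense_in_ball S x r ->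
  exists y (r' : R), [/\ 0 < r', r' <= r / 2,
    forall w, rnorm (w - y) <= r' -> rnorm (w - x) < r &
    forall z, S z -> 2 * r' < rnorm (y - z)].
Proof.
move=> r0; rewrite /dense_in_ball -existsNE => -[y].
rewrite not_implyE -existsNE => -[xy [e]]; rewrite not_implyE => -[e0 not_near].
have far z : S z -> e <= rnorm (y - z).
  by move=> Sz; rewrite leNgt; apply/negP => yz; apply: not_near; exists z.
have d0 := rnorm_ge0 (y - x).
pose r' := Num.min (e / 3) ((r - rnorm (y - x)) / 2).
have r'e : r' <= e / 3 by rewrite ge_min lexx.
have r'd : r' <= (r - rnorm (y - x)) / 2 by rewrite ge_min lexx orbT.
exists y, r'; split.
- by rewrite lt_min !divr_gt0 // subr_gt0.
- lra.
- by move=> w wy; have := rnormD (w - y) (y - x); rewrite addrA subrK; lra.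
- by move=> z /far; lra.
Qed.

Lemma nested_balls_limit (x : nat -> V) (r : nat -> R) :
  (forall k d, rnorm (x (k + d)%N - x k) <= r k) ->
  (forall k, r k <= 2 ^- k) ->
  exists l, forall k, rnorm (l - x k) <= r k.
Proof.
move=> nest small.
have [l xl] : exists l : V, x @ \oo --> l.
  apply: cauchy_rnorm_cvg => e e0.
  have [k hk] := pow2_small (ler0n R 2) e0.
  exists k => n m kn km.
  have := nest k (n - k)%N; have := nest k (m - k)%N; rewrite !subnKC //.
  have := rnormD (x n - x k) (x k - x m); rewrite addrA subrK (rdistC (x k)).
  by have := hk k (leqnn k); have := small k; lra.
exists l => k; apply: (rnorm_cvg_le (N := k) xl) => n kn.
by have := nest k (n - k)%N; rewrite subnKC.
Qed.

Lemma baire_dense_ball (Cn : nat -> set V) : (forall x, exists n, Cn n x) ->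
  exists n x (r : R), 0 < r /\ dense_in_ball (Cn n) x r.
Proof.
move=> cover; apply: contrapT => nowhere_dense.
have step (kb : nat * (V * R)) : exists b' : V * R, 0 < kb.2.2 ->
    [/\ 0 < b'.2, b'.2 <= kb.2.2 / 2,
     forall w, rnorm (w - b'.1) <= b'.2 -> rnorm (w - kb.2.1) < kb.2.2 &
     forall z, Cn kb.1 z -> 2 * b'.2 < rnorm (b'.1 - z)].
  case: kb => k [x r] /=; have [r0|r0] := ltP 0 r; last first.
    by exists (x, r).
  have [|y [r' ?]] := shrink_ball (S := Cn k) (x := x) r0; last by exists (y, r').
  by move=> dense; apply: nowhere_dense; exists k, x, r.
have [next Pnext] := choice step.
pose fix ball k := if k is k'.+1 then next (k', ball k') else (0 : V, 1 : R).
pose x k := (ball k).1; pose r k := (ball k).2.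
have r_pos k : 0 < r k.
  by elim: k => [|k IH] //=; have [] := Pnext (k, ball k) IH.
have Pball k := Pnext (k, ball k) (r_pos k).
have nest k d : rnorm (x (k + d)%N - x k) <= r k.
  elim: d k => [|d IH] k; first by rewrite addn0 subrr rnorm0 ltW.
  by rewrite addnS -addSn; have [_ _ inside _] := Pball k; apply/ltW/inside/IH.
have small k : r k <= 2 ^- k.
  elim: k => [|k IH]; first by rewrite expr0 invr1.
  have [_ half _ _] := Pball k; rewrite exprS invfM.
  by apply: (le_trans half); rewrite mulrC ler_wpM2l.
have [l l_in] := nested_balls_limit nest small.
have [n Cnl] := cover l; have [_ _ _ far] := Pball n.
by have := far _ Cnl; have := l_in n.+1; have := r_pos n.+1; rewrite rdistC; lra.
Qed.

End Baire.

Section ClosedGraph.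
Context {R : realType} {V W : completeNormedModType R[i]} (f : V -> W).
Hypotheses (fD : {morph f : x y / x + y}) (fZ : scalable f).

Definition approx_bounded_by (M : R) := forall v (e : R), 0 < e ->
  exists w, rnorm (f w) <= M * rnorm v /\ rnorm (v - w) < e.

(* Baire yields a ball B(x0, r) in which {v | |f v| <= n} is dense; differences
   of its points approximate every vector of norm < r, and rescaling gives
   M = 4 n / r. *)
Lemma baire_bounded_approx : exists2 M : R, 0 <= M & approx_bounded_by M.
Proof.
pose Cn n := [set v | rnorm (f v) <= n%:R].
have cover v : exists n, Cn n v.
  by exists (Num.truncn (rnorm (f v))).+1; apply/ltW/truncnS_gt.
have [n [x0 [r [r0 dense]]]] := baire_dense_ball cover.
have approx_small v (e : R) : rnorm v < r -> 0 < e ->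
    exists w, rnorm (f w) <= 2 * n%:R /\ rnorm (v - w) < e.
  move=> vr e0; have e20 : 0 < e / 2 by rewrite divr_gt0.
  have vx0 : rnorm (x0 + v - x0) < r by rewrite addrAC subrr add0r.
  have x0x0 : rnorm (x0 - x0) < r by rewrite subrr rnorm0.
  have [z1 Cz1 z1v] := dense _ vx0 _ e20.
  have [z2 Cz2 z2x] := dense _ x0x0 _ e20.
  rewrite /Cn /= in Cz1 Cz2.
  exists (z1 - z2); split.
    by rewrite (addmorphB fD); have := rnormD (f z1) (- f z2); rewrite rnormN; lra.
  have -> : v - (z1 - z2) = (x0 + v - z1) - (x0 - z2).
    by rewrite (opprB x0) [_ + (z2 - x0)]addrC !addrA subrK opprB addrCA addrA.
  by have := rnormD (x0 + v - z1) (- (x0 - z2)); rewrite rnormN; lra.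
exists (4 * n%:R / r) => [|v e e0]; first by rewrite divr_ge0 // ltW.
have [->|v0] := eqVneq v 0.
  by exists 0; rewrite (addmorph0 fD) subr0 !rnorm0 mulr0.
have v_pos : 0 < rnorm v by rewrite rnorm_gt0.
pose t := 2 * rnorm v / r; have t0 : 0 < t by rewrite divr_gt0 // mulr_gt0.
have vr : rnorm (t^-1%:C *: v) < r.
  rewrite rnormZ_real ?invr_ge0 ?(ltW t0) // /t invf_div.
  have -> : r / (2 * rnorm v) * rnorm v = r / 2 by field; rewrite gt_eqF.
  lra.
have et : 0 < e / t by rewrite divr_gt0.
have [w [fw vw]] := approx_small _ _ vr et.
exists (t%:C *: w); split.
  rewrite fZ rnormZ_real ?(ltW t0) //.
  have -> : 4 * n%:R / r * rnorm v = t * (2 * n%:R) by rewrite /t; ring.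
  by rewrite ler_pM2l.
have -> : v - t%:C *: w = t%:C *: (t^-1%:C *: v - w).
  by rewrite scalerBr scalerA -rmorphM /= mulfV ?gt_eqF // scale1r.
rewrite rnormZ_real ?(ltW t0) //.
by rewrite -(ltr_pM2l t0) mulrCA mulfV ?gt_eqF ?mulr1 in vw.
Qed.

Hypothesis f_closed :
  forall (s : nat -> V) (y : W), s @ \oo --> 0 -> f \o s @ \oo --> y -> y = 0.

(* Successive approximation writes v = sum_k w_k with |f w_k| <= M |v| / 2^k;
   the graph condition forces f of the remainders to tend to 0. *)
Lemma closed_graph_approx_bound (M : R) : 0 <= M -> approx_bounded_by M ->
  forall v, rnorm (f v) <= 2 * M * rnorm v.
Proof.
move=> M0 approx v.
pose h k := rnorm v * 2 ^- k.
have h_ge0 k : 0 <= h k by rewrite mulr_ge0 ?rnorm_ge0 ?invr_ge0 ?exprn_ge0.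
have hS k : h k.+1 = h k / 2 by rewrite /h exprS invfM; ring.
have [->|v0] := eqVneq v 0; first by rewrite (addmorph0 fD) !rnorm0 mulr0.
have h_pos k : 0 < h k by rewrite mulr_gt0 ?rnorm_gt0 ?invr_gt0 ?exprn_gt0.
have step (p : V * R) : exists w, 0 < p.2 ->
    rnorm (f w) <= M * rnorm p.1 /\ rnorm (p.1 - w) < p.2.
  case: p => [x e] /=; have [e0|e0] := ltP 0 e; last by exists 0.
  by have [w ?] := approx x _ e0; exists w.
have [next Pnext] := choice step.
pose fix rem k := if k is k'.+1 then rem k' - next (rem k', h k) else v.
have rem_le k : rnorm (rem k) <= h k.
  case: k => [|k]; first by rewrite /h expr0 invr1 mulr1.
  by have [_ /ltW] := Pnext (rem k, h k.+1) (h_pos _).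
have f_next k : rnorm (f (next (rem k, h k.+1))) <= M * h k.
  have [fw _] := Pnext (rem k, h k.+1) (h_pos _).
  exact: le_trans fw (ler_wpM2l M0 (rem_le k)).
have f_rem k d : rnorm (f (rem k) - f (rem (k + d)%N)) <= 2 * M * (h k - h (k + d)%N).
  elim: d => [|d IH]; first by rewrite addn0 !subrr rnorm0 mulr0.
  rewrite addnS /= (addmorphB fD) opprD opprK addrA; set w := next _.
  have := rnormD (f (rem k) - f (rem (k + d)%N)) (f w).
  by have := f_next (k + d)%N; rewrite -/w hS; lra.
have rem0 : rem @ \oo --> 0.
  apply/cvg_rnormP => e e0; have [N hN] := pow2_small (rnorm_ge0 v) e0.
  by exists N => n /hN; rewrite subr0; apply: le_lt_trans.
have [y f_rem_y] : exists y : W, f \o rem @ \oo --> y.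
  apply: cauchy_rnorm_cvg => e e0.
  have [N hN] := pow2_small (mulr_ge0 (mulr_ge0 (ler0n R 4) M0) (rnorm_ge0 v)) e0.
  exists N => n m Nn Nm /=.
  have := f_rem N (n - N)%N; have := f_rem N (m - N)%N; rewrite !subnKC //.
  have := rnormD (f (rem n) - f (rem N)) (f (rem N) - f (rem m)).
  rewrite addrA subrK (rdistC (f (rem n)) (f (rem N))).
  have := hN N (leqnn N); have := h_ge0 n; have := h_ge0 m; rewrite /h; nra.
have y0 := f_closed rem0 f_rem_y; rewrite {}y0 in f_rem_y.
rewrite -rnormN -(add0r (- f v)); apply: (rnorm_cvg_le (N := 0%N) f_rem_y) => n _.
rewrite /= rdistC; have := f_rem 0%N n; have := h_ge0 n.
by rewrite /h expr0 invr1 mulr1; nra.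
Qed.

Theorem closed_graph : norm_bounded f.
Proof.
have [M M0 approx] := baire_bounded_approx.
exists (2 * M); first by rewrite mulr_ge0.
exact: closed_graph_approx_bound.
Qed.

End ClosedGraph.

Lemma norm_bounded_of_separating {R : realType} {V W : completeNormedModType R[i]}
    {Y : normedModType R[i]} {I : Type} (f : V -> W) (g : I -> W -> Y) :
  {morph f : x y / x + y} -> scalable f ->
  (forall i, {morph g i : x y / x + y}) -> (forall i, norm_bounded (g i)) ->
  (forall i, norm_bounded (g i \o f)) ->
  (forall y, (forall i, g i y = 0) -> y = 0) ->
  norm_bounded f.
Proof.
move=> fD fZ gD gb gfb separating.
apply: closed_graph => // s y s0 fsy; apply: separating => i.
have gfD : {morph g i \o f : x y / x + y} by move=> x z /=; rewrite fD gD.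
have gfs_y : (g i \o (f \o s)) @ \oo --> g i y.
  by apply: continuous_cvg fsy; exact: norm_bounded_continuous.
have gfs_0 : (g i \o f \o s) @ \oo --> 0.
  rewrite -(addmorph0 (gD i)) -(addmorph0 fD).
  by apply: continuous_cvg s0; exact: norm_bounded_continuous.
exact: norm_cvg_unique gfs_y gfs_0.
Qed.

Section Opposite.
Variable K : numFieldType.
Implicit Types A U X : completeNormedModType K.

Lemma banach_algebra_op A (mul : A -> A -> A) :
  banach_algebra mul -> banach_algebra (fun a b => mul b a).
Proof.
by move=> [? [? [? [? [? mN]]]]]; do !split => //; move=> a b; rewrite mulrC; exact: mN.
Qed.

Lemma character_op A (mul : A -> A -> A) (theta : A -> K) :
  character mul theta -> character (fun a b => mul b a) theta.
Proof. by move=> [tD [tZ [tM t0]]]; do 3!split => //; move=> a b; rewrite tM mulrC. Qed.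

Lemma lau_mul_op A U (theta : A -> K) mulA mulU :
  lau_mul theta (fun a b : A => mulA b a) (fun u v : U => mulU v u) =
  (fun p q => lau_mul theta mulA mulU q p).
Proof.
by apply/funext => p; apply/funext => q; rewrite /lau_mul [theta q.1 *: _ + _]addrC.
Qed.

Lemma banach_bimodule_op A U X (mulB : A * U -> A * U -> A * U) lm (rm : X -> _ -> X) :
  banach_bimodule mulB lm rm ->
  banach_bimodule (fun p q => mulB q p) (fun p x => rm x p) (fun x p => lm p x).
Proof.
move=> [? [? [? [? [? [? [? [? [? [? [lm_rm [? ?]]]]]]]]]]]].
by do !split => //; move=> p q x; rewrite lm_rm.
Qed.

Lemma simple_bimodule_op A U X (lm : A * U -> X -> X) rm :
  simple_bimodule lm rm -> simple_bimodule (fun p x => rm x p) (fun x p => lm p x).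
Proof. by move=> hS S [? [? [? [? [? ?]]]]]; apply: hS; do !split. Qed.

Lemma derivation_op A U X (mulB : A * U -> A * U -> A * U) lm rm (D : _ -> X) :
  derivation mulB lm rm D ->
  derivation (fun p q => mulB q p) (fun p x => rm x p) (fun x p => lm p x) D.
Proof. by move=> [? [? DM]]; do !split => //; move=> p q; rewrite DM addrC. Qed.

Lemma lau_bimodule_op A U X (theta : A -> K) mulA mulU lm (rm : X -> _ -> X) :
  banach_bimodule (lau_mul theta mulA mulU) lm rm ->
  banach_bimodule (lau_mul theta (fun a b => mulA b a) (fun u v : U => mulU v u))
    (fun p x => rm x p) (fun x p => lm p x).
Proof. by rewrite lau_mul_op; exact: banach_bimodule_op. Qed.

Lemma lau_derivation_op A U X (theta : A -> K) mulA mulU lm rm (D : _ -> X) :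
  derivation (lau_mul theta mulA mulU) lm rm D ->
  derivation (lau_mul theta (fun a b => mulA b a) (fun u v : U => mulU v u))
    (fun p x => rm x p) (fun x p => lm p x) D.
Proof. by rewrite lau_mul_op; exact: derivation_op. Qed.

Lemma centre_A_op A U X (lm : A * U -> X -> X) rm :
  centre_A (fun p x => rm x p) (fun x p => lm p x) = centre_A lm rm.
Proof. by apply/seteqP; split => x /= xC a; rewrite xC. Qed.

End Opposite.

Section Pairs.
Variables (K : pzRingType) (A U : lmodType K).

Lemma pair_split (a : A) (u : U) : (a, u) = (a, 0) + (0, u).
Proof. by congr (_, _); rewrite /= ?addr0 ?add0r. Qed.

Lemma pairD0 (a b : A) : (a + b, 0 : U) = (a, 0) + (b, 0).
Proof. by congr (_, _); rewrite /= addr0. Qed.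

Lemma pair0D (u v : U) : (0 : A, u + v) = (0, u) + (0, v).
Proof. by congr (_, _); rewrite /= addr0. Qed.

Lemma pairZ0 (k : K) (a : A) : (k *: a, 0 : U) = k *: (a, 0).
Proof. by congr (_, _); rewrite /= scaler0. Qed.

Lemma pair0Z (k : K) (u : U) : (0 : A, k *: u) = k *: (0, u).
Proof. by congr (_, _); rewrite /= scaler0. Qed.

End Pairs.

Section BanachAlgebra.
Variables (K : numFieldType) (A : completeNormedModType K) (mul : A -> A -> A).
Hypothesis hA : banach_algebra mul.

Lemma banach_mul0l a : mul 0 a = 0.
Proof.
by case: hA => _ [mDl _]; apply: (@addrI _ (mul 0 a)); rewrite -mDl !addr0.
Qed.

Lemma banach_mul0r a : mul a 0 = 0.
Proof.
by case: hA => _ [_ [mDr _]]; apply: (@addrI _ (mul a 0)); rewrite -mDr !addr0.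
Qed.

Lemma character0 (theta : A -> K) : character mul theta -> theta 0 = 0.
Proof. by case=> tD _; apply: (@addrI _ (theta 0)); rewrite -tD !addr0. Qed.

End BanachAlgebra.

Section LauBimodule.
Context {R : realType}.
Local Notation C := R[i].
Variables (A U X : completeNormedModType C)
  (mulA : A -> A -> A) (mulU : U -> U -> U) (theta : A -> C)
  (lm : A * U -> X -> X) (rm : X -> A * U -> X) (D : A * U -> X).
Local Notation mulB := (lau_mul theta mulA mulU).
Hypotheses (hA : banach_algebra mulA) (hU : banach_algebra mulU)
  (hth : character mulA theta) (hX : banach_bimodule mulB lm rm)
  (hS : simple_bimodule lm rm) (hD : derivation mulB lm rm D).

Lemma thetaM a b : theta (mulA a b) = theta a * theta b.
Proof. by case: hth => _ [_ []]. Qed.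

Lemma lau_mulUp u p : mulB (0, u) p = (0, theta p.1 *: u + mulU u p.2).
Proof. by rewrite /lau_mul /= (banach_mul0l hA) (character0 hth) scale0r add0r. Qed.

Lemma lau_mulpA p a : mulB p (a, 0) = (mulA p.1 a, theta a *: p.2).
Proof. by rewrite /lau_mul /= scaler0 add0r (banach_mul0r hU) addr0. Qed.

Lemma lau_mulUA u a : mulB (0, u) (a, 0) = (0, theta a *: u).
Proof. by rewrite lau_mulpA /= (banach_mul0l hA). Qed.

Lemma lmDx p x y : lm p (x + y) = lm p x + lm p y.
Proof. by case: hX => _ []. Qed.

Lemma lmZp k p x : lm (k *: p) x = k *: lm p x.
Proof. by case: hX => _ [_ []]. Qed.

Lemma lmZx k p x : lm p (k *: x) = k *: lm p x.
Proof. by case: hX => _ [_ [_ []]]. Qed.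

Lemma rmDp x p q : rm x (p + q) = rm x p + rm x q.
Proof. by case: hX => _ [_ [_ [_ []]]]. Qed.

Lemma rmDx p x y : rm (x + y) p = rm x p + rm y p.
Proof. by case: hX => _ [_ [_ [_ [_ []]]]]. Qed.

Lemma rmZp k p x : rm x (k *: p) = k *: rm x p.
Proof. by case: hX => _ [_ [_ [_ [_ [_ []]]]]]. Qed.

Lemma rmZx k p x : rm (k *: x) p = k *: rm x p.
Proof. by case: hX => _ [_ [_ [_ [_ [_ [_ []]]]]]]. Qed.

Lemma lmM p q x : lm (mulB p q) x = lm p (lm q x).
Proof. by case: hX => _ [_ [_ [_ [_ [_ [_ [_ []]]]]]]]. Qed.

Lemma rmM p q x : rm x (mulB p q) = rm (rm x p) q.
Proof. by case: hX => _ [_ [_ [_ [_ [_ [_ [_ [_ []]]]]]]]]. Qed.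

Lemma lm_rm p q x : rm (lm p x) q = lm p (rm x q).
Proof. by case: hX => _ [_ [_ [_ [_ [_ [_ [_ [_ [_ []]]]]]]]]]. Qed.

Lemma rm0 p : rm 0 p = 0.
Proof. exact: (addmorph0 (f := rm^~ p) (rmDx p)). Qed.

Lemma lm_bound p x : rnorm (lm p x) <= (rnorm p.1 + rnorm p.2) * rnorm x.
Proof.
case: hX => _ [_ [_ [_ [_ [_ [_ [_ [_ [_ [_ [lmN _]]]]]]]]]]].
by move: (lmN p x); rewrite /lau_norm !rnormE -rmorphD -rmorphM lecR.
Qed.

Lemma rm_bound p x : rnorm (rm x p) <= (rnorm p.1 + rnorm p.2) * rnorm x.
Proof.
case: hX => _ [_ [_ [_ [_ [_ [_ [_ [_ [_ [_ [_ rmN]]]]]]]]]]].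
by move: (rmN p x); rewrite /lau_norm !rnormE -rmorphD -rmorphM lecR.
Qed.

Lemma lmU_bounded u : norm_bounded (lm (0, u)).
Proof.
exists (rnorm u) => [|x]; first exact: rnorm_ge0.
by have := lm_bound (0, u) x; rewrite /= rnorm0 add0r.
Qed.

Lemma rm_thetaD a : {morph (fun x => rm x (a, 0) - theta a *: x) : x y / x + y}.
Proof. by move=> x y; rewrite rmDx scalerDr opprD addrACA. Qed.

Lemma rm_theta_bounded a : norm_bounded (fun x => rm x (a, 0) - theta a *: x).
Proof.
exists (rnorm a + rnorm (theta a)) => [|x]; first by rewrite addr_ge0 ?rnorm_ge0.
have := rnormD (rm x (a, 0)) (- (theta a *: x)); rewrite rnormN rnormZ.
by have := rm_bound (a, 0) x; rewrite /= rnorm0 addr0; lra.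
Qed.

Lemma kernel_subbimodule_cases {I : Type} (g : I -> X -> X) (S : set X) :
  (forall x, S x <-> forall i, g i x = 0) ->
  (forall i, {morph g i : x y / x + y}) -> (forall i, scalable (g i)) ->
  (forall i, norm_bounded (g i)) ->
  (forall p x, S x -> S (lm p x)) -> (forall p x, S x -> S (rm x p)) ->
  S = [set 0] \/ S = setT.
Proof.
move=> Sg gD gZ gb Sl Sr; apply: hS.
have -> : S = [set x | forall i, g i x = 0] by apply/seteqP; split => x /Sg.
split; first by move=> i; exact: addmorph0.
split; first by move=> x y /= x0 y0 i; rewrite gD x0 y0 addr0.
split; first by move=> k x /= x0 i; rewrite gZ x0 scaler0.
split; first by move=> p x /Sg /(Sl p) /Sg.
split; first by move=> p x /Sg /(Sr p) /Sg.
exact: closed_joint_kernel.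
Qed.

Definition left_ann_U : set X := [set x | forall u : U, lm (0, u) x = 0].

Definition right_theta_eigen : set X :=
  [set x | forall a : A, rm x (a, 0) = theta a *: x].

Lemma left_ann_U_cases : left_ann_U = [set 0] \/ left_ann_U = setT.
Proof.
apply: (@kernel_subbimodule_cases _ (fun u x => lm (0, u) x)) => //.
- by move=> u x y; rewrite lmDx.
- by move=> u k x; rewrite lmZx.
- exact: lmU_bounded.
- by move=> p x x0 u; rewrite -lmM lau_mulUp x0.
- by move=> p x x0 u; rewrite -lm_rm x0 rm0.
Qed.

Lemma right_theta_eigen_cases :
  right_theta_eigen = [set 0] \/ right_theta_eigen = setT.
Proof.
apply: (@kernel_subbimodule_cases _ (fun a x => rm x (a, 0) - theta a *: x)).
- by move=> x; split => xE a; [rewrite xE subrr | apply/eqP; rewrite -subr_eq0 xE].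
- exact: rm_thetaD.
- by move=> a k x; rewrite rmZx scalerBr !scalerA mulrC.
- exact: rm_theta_bounded.
- by move=> p x xE a; rewrite lm_rm xE lmZx.
- move=> [b v] x xE a; rewrite -rmM lau_mulpA /= (pair_split _ (theta a *: v)) rmDp.
  by rewrite xE thetaM pair0Z rmZp (pair_split b v) rmDp xE scalerDr scalerA mulrC.
Qed.

Lemma nontrivial_of_centre_A_neqT : centre_A lm rm <> setT -> exists x : X, x != 0.
Proof.
move=> centre_neqT; apply: contrapT => trivial; apply: centre_neqT.
have all0 (y : X) : y = 0 by apply: contrapT => /eqP y0; apply: trivial; exists y.
by apply/seteqP; split => // x _ a; rewrite (all0 (lm _ _)) (all0 (rm _ _)).
Qed.

Lemma left_theta_eigen_of_ann0 :
  left_ann_U = [set 0] -> forall a x, lm (a, 0) x = theta a *: x.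
Proof.
move=> NL0 a x; apply/eqP; rewrite -subr_eq0; apply/eqP.
suff : left_ann_U (lm (a, 0) x - theta a *: x) by rewrite NL0.
move=> u; rewrite (addmorphB (lmDx (0, u))) -lmM lau_mulUA.
by rewrite pair0Z lmZp lmZx subrr.
Qed.

Lemma rnorm_theta_le : (exists x0 : X, x0 != 0) ->
  (forall a x, lm (a, 0) x = theta a *: x) -> forall a, rnorm (theta a) <= rnorm a.
Proof.
move=> [x0 x0_neq0] left_eigen a; have := lm_bound (a, 0) x0.
by rewrite left_eigen rnormZ /= rnorm0 addr0 ler_pM2r // rnorm_gt0.
Qed.

Lemma derivationD p q : D (p + q) = D p + D q.
Proof. by case: hD. Qed.

Lemma derivationZ k p : D (k *: p) = k *: D p.
Proof. by case: hD => _ []. Qed.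

Lemma derivationUA u a :
  rm (D (0, u)) (a, 0) + lm (0, u) (D (a, 0)) = theta a *: D (0, u).
Proof. by case: hD => _ [_ DM]; rewrite -DM lau_mulUA pair0Z derivationZ. Qed.

Lemma derivationU_bounded :
  right_theta_eigen = [set 0] -> norm_bounded (fun u => D (0, u)).
Proof.
move=> V0.
apply: (norm_bounded_of_separating (g := fun a x => rm x (a, 0) - theta a *: x)).
- by move=> u v; rewrite pair0D derivationD.
- by move=> k u; rewrite pair0Z derivationZ.
- exact: rm_thetaD.
- exact: rm_theta_bounded.
- move=> a; exists (rnorm (D (a, 0))) => [|u]; first exact: rnorm_ge0.
  rewrite /= -(derivationUA u a) opprD addrA subrr add0r rnormN mulrC.
  by have := lm_bound (0, u) (D (a, 0)); rewrite /= rnorm0 add0r.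
- move=> y y0; suff : right_theta_eigen y by rewrite V0.
  by move=> a; apply/eqP; rewrite -subr_eq0 y0.
Qed.

Lemma derivationA_bounded : left_ann_U = [set 0] ->
  (forall a, rnorm (theta a) <= rnorm a) -> norm_bounded (fun a => D (a, 0)).
Proof.
move=> NL0 theta_le.
apply: (norm_bounded_of_separating (g := fun u x => lm (0, u) x)).
- by move=> a b; rewrite pairD0 derivationD.
- by move=> k a; rewrite pairZ0 derivationZ.
- by move=> u x y; rewrite lmDx.
- exact: lmU_bounded.
- move=> u; exists (2 * rnorm (D (0, u))) => [|a]; first by rewrite mulr_ge0 ?rnorm_ge0.
  rewrite /= -[lm _ _](addKr (rm (D (0, u)) (a, 0))) derivationUA.
  have := rnormD (- rm (D (0, u)) (a, 0)) (theta a *: D (0, u)).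
  rewrite rnormN rnormZ.
  have := rm_bound (a, 0) (D (0, u)); rewrite /= rnorm0 addr0.
  by have := theta_le a; have := rnorm_ge0 (D (0, u)); nra.
- by move=> y y0; suff : left_ann_U y by rewrite NL0.
Qed.

Lemma derivation_continuous_of_bounded :
  norm_bounded (fun a => D (a, 0)) -> norm_bounded (fun u => D (0, u)) -> continuous D.
Proof.
move=> [cA cA0 DA] [cU cU0 DU].
apply: norm_bounded_continuous; first exact: derivationD.
exists (cA + cU) => [|[a u]]; first by rewrite addr_ge0.
rewrite {1}(pair_split a u) derivationD; have := rnormD (D (a, 0)) (D (0, u)).
have := DA a; have := DU u; have := rnorm_fst (a, u); have := rnorm_snd (a, u).
by rewrite /=; nra.
Qed.

Lemma derivation_continuous_of_left_ann0 :
  centre_A lm rm <> setT -> left_ann_U = [set 0] -> continuous D.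
Proof.
move=> centre_neqT NL0.
have left_eigen := left_theta_eigen_of_ann0 NL0.
have V0 : right_theta_eigen = [set 0].
  case: right_theta_eigen_cases => // VT; case: centre_neqT.
  apply/seteqP; split => // x _ a; rewrite left_eigen.
  by have : right_theta_eigen x by rewrite VT.
apply: derivation_continuous_of_bounded; last exact: derivationU_bounded.
apply: derivationA_bounded => //; apply: rnorm_theta_le => //.
exact: nontrivial_of_centre_A_neqT.
Qed.

End LauBimodule.

Theorem corollary2p10 (R : realType)
  (A U X : completeNormedModType (R[i]))
  (mulA : A -> A -> A) (mulU : U -> U -> U) (theta : A -> R[i])
  (lm : A * U -> X -> X) (rm : X -> A * U -> X) (D : A * U -> X) :
  banach_algebra mulA ->
  banach_algebra mulU ->
  character mulA theta ->
  banach_bimodule (lau_mul theta mulA mulU) lm rm ->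
  simple_bimodule lm rm ->
  derivation (lau_mul theta mulA mulU) lm rm D ->
  ((ann_U lm rm <> setT /\ centre_A lm rm <> setT) \/
   (ann_U lm rm = [set 0] /\ centre_A lm rm <> setT)) ->
  continuous D.
Proof.
move=> hA hU hth hX hS hD cond.
have centre_neqT : centre_A lm rm <> setT by case: cond => -[].
have annU_neqT : ann_U lm rm <> setT.
  case: cond => [[]//|[ann0 _] annT].
  have [x x_neq0] := nontrivial_of_centre_A_neqT centre_neqT.
  have : [set 0] x by rewrite -ann0 annT.
  by move=> /= x0; rewrite x0 eqxx in x_neq0.
have [NL0|NLT] := left_ann_U_cases hA hth hX hS.
  exact: derivation_continuous_of_left_ann0 hA hU hth hX hS hD centre_neqT NL0.
have hAo := banach_algebra_op hA; have hUo := banach_algebra_op hU.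
have htho := character_op hth; have hXo := lau_bimodule_op hX.
have hSo := simple_bimodule_op hS; have hDo := lau_derivation_op hD.
have [NR0|NRT] := left_ann_U_cases hAo htho hXo hSo.
  apply: (derivation_continuous_of_left_ann0 hAo hUo htho hXo hSo hDo _ NR0).
  by rewrite centre_A_op.
case: annU_neqT; apply/seteqP; split => // x _ u; split.
  by have : left_ann_U lm x by rewrite NLT.
by have : left_ann_U (fun p x => rm x p) x by rewrite NRT.
Qed.
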